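(* Let $M$ be a matroid and let $M^{\mathrm{fin}}$ be its finitarization. Suppose $F$ is a base of $M^{\mathrm{fin}}$ and $B_1$, $B_2$ are bases of $M$ with $B_1\subseteq F$ and $B_2\subseteq F$. Then $|F\setminus B_1|=|F\setminus B_2|$, where all infinite cardinalities are regarded as equal.
   Context: A matroid $M=(E,\mathcal{L})$ consists of a (possibly infinite) set $E$ and a family $\mathcal{L}\subseteq 2^E$ of independent sets such that: (I1) $\emptyset\in\mathcal{L}$; (I2) subsets of independent sets are independent; (I3) if $B$ is a maximal element of $\mathcal{L}$ and $A\in\mathcal{L}$ is not maximal, there is $b\in B\setminus A$ with $A\cup\{b\}\in\mathcal{L}$; (I4) if $A\in\mathcal{L}$ and $A\subseteq X\subseteq E$, then $\{S\in\mathcal{L}: A\subseteq S\subseteq X\}$ has a maximal element (w.r.t. inclusion). Bases are the maximal independent sets. The finitarization of $M$ is $M^{\mathrm{fin}}=(E,\mathcal{L}^{\mathrm{fin}})$, where $\mathcal{L}^{\mathrm{fin}}$ consists of all $S\subseteq E$ every finite subset of which lies in $\mathcal{L}$; $M^{\mathrm{fin}}$ is a matroid. Convention: in comparing cardinalities, all infinite cardinalities are treated as a single value $\infty$. *)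

From Stdlib Require Import List.
Import ListNotations.

Definition subset {E : Type} (A B : E -> Prop) : Prop := forall x, A x -> B x.
Definition setD {E : Type} (A B : E -> Prop) : E -> Prop := fun x => A x /\ ~ B x.
Definition setU1 {E : Type} (A : E -> Prop) (b : E) : E -> Prop := fun x => A x \/ x = b.

Definition maximal_in {E : Type} (P : (E -> Prop) -> Prop) (S : E -> Prop) : Prop :=
  P S /\ forall T, P T -> subset S T -> subset T S.

Definition finite_set {E : Type} (A : E -> Prop) : Prop :=
  exists l : list E, forall x, A x <-> In x l.

Definition has_card {E : Type} (A : E -> Prop) (n : nat) : Prop :=
  exists l : list E, NoDup l /\ length l = n /\ forall x, A x <-> In x l.

Definition card_eq_oo {E : Type} (A B : E -> Prop) : Prop :=
  (exists n, has_card A n /\ has_card B n) \/ (~ finite_set A /\ ~ finite_set B).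

Record is_matroid {E : Type} (L : (E -> Prop) -> Prop) : Prop := {
  I1 : L (fun _ => False);
  I2 : forall A B, L B -> subset A B -> L A;
  I3 : forall A B, maximal_in L B -> L A -> ~ maximal_in L A ->
         exists b, B b /\ ~ A b /\ L (setU1 A b);
  I4 : forall A X, L A -> subset A X ->
         exists S, maximal_in (fun S => L S /\ subset A S /\ subset S X) S
}.

Definition is_base {E : Type} (L : (E -> Prop) -> Prop) (B : E -> Prop) : Prop :=
  maximal_in L B.

Definition fin_indep {E : Type} (L : (E -> Prop) -> Prop) (S : E -> Prop) : Prop :=
  forall T, subset T S -> finite_set T -> L T.

(** Only single-element base exchange (axioms I2, I3) is used, so [F] need
    not be a base of the finitarization.  Induct on [n = |F \ B1|]: if [B1 <> B2],
    pick [x] in [B1 \ B2] and exchange it for some [b] in [B2 \ B1], giving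
    the base [B1 - x + b].  Inside [F - x] this base misses [(F \ B1) - b],
    of size [n - 1], while [B2] misses [(F \ B2) - x]; by induction these have
    the same size, and adding [x] back gives [|F \ B2| = n]. *)
From Stdlib Require Import List Classical Lia.
Import ListNotations.

Definition setD1 {E : Type} (A : E -> Prop) (x : E) : E -> Prop :=
  fun y => A y /\ y <> x.

Section SetAlgebra.
Context {E : Type}.

Lemma setD_setD1_setU1 (F B : E -> Prop) x b y : B x ->
  setD (setD1 F x) (setU1 (setD1 B x) b) y <-> setD1 (setD F B) b y.
Proof.
  intros Hx; unfold setD, setD1, setU1; split.
  - intros [[HyF Hyx] HyB]; tauto.
  - intros [[HyF HyB] Hyb]; split; [split|]; [auto|congruence|tauto].
Qed.

Lemma setU1_setD1 (A : E -> Prop) x y : A x -> setU1 (setD1 A x) x y <-> A y.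
Proof.
  intros Hx; unfold setU1, setD1; split; [intros [[]| ->]; auto|].
  destruct (classic (y = x)); auto.
Qed.

End SetAlgebra.

Section FiniteCardinality.
Context {E : Type}.

Lemma has_card_ext (A A' : E -> Prop) n :
  (forall x, A x <-> A' x) -> has_card A n -> has_card A' n.
Proof.
  intros HAA' [l [Hnd [Hlen Hl]]].
  exists l; split; [|split]; auto.
  intros y; rewrite <- HAA'; apply Hl.
Qed.

Lemma has_card0 (A : E -> Prop) x : has_card A 0 -> ~ A x.
Proof.
  intros [[|a l] [_ [Hlen Hl]]] Hx; [|discriminate].
  exact (proj1 (Hl x) Hx).
Qed.

Lemma has_card_setD1 (A : E -> Prop) n b :
  has_card A (S n) -> A b -> has_card (setD1 A b) n.
Proof.
  intros [l [Hnd [Hlen Hl]]] Hb.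
  destruct (in_split _ _ (proj1 (Hl b) Hb)) as [l1 [l2 ->]].
  exists (l1 ++ l2); split; [|split].
  - exact (NoDup_remove_1 _ _ _ Hnd).
  - rewrite length_app in *; simpl in Hlen; lia.
  - intros x; split.
    + intros [Hx Hxb]; apply Hl, in_app_or in Hx.
      apply in_or_app; destruct Hx as [|[|]]; auto; congruence.
    + intros Hx; split.
      * apply Hl, in_or_app; apply in_app_or in Hx; simpl; tauto.
      * intros ->; exact (NoDup_remove_2 _ _ _ Hnd Hx).
Qed.

Lemma has_card_setU1 (A : E -> Prop) n x :
  has_card A n -> ~ A x -> has_card (setU1 A x) (S n).
Proof.
  intros [l [Hnd [Hlen Hl]]] Hx.
  exists (x :: l); split; [|split]; simpl.
  - constructor; [rewrite <- Hl|]; auto.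
  - congruence.
  - intros y; split.
    + intros [Hy| ->]; [right; apply Hl|left]; auto.
    + intros [<-|Hy]; [right|left; apply Hl]; auto.
Qed.

Lemma has_card_list (l : list E) : exists n, has_card (fun x => In x l) n.
Proof.
  induction l as [|a l [n Hn]].
  - exists 0, []; split; [apply NoDup_nil|split; reflexivity].
  - destruct (classic (In a l)) as [Ha|Ha].
    + exists n; apply (has_card_ext (fun y => In y l)); [|exact Hn].
      intros y; simpl; split; [auto|intros [<-|]; auto].
    + exists (S n); apply (has_card_ext (setU1 (fun y => In y l) a)).
      * intros y; unfold setU1; simpl; split; intros [H|H]; auto.
      * now apply has_card_setU1.
Qed.

Lemma finite_set_has_card (A : E -> Prop) :
  finite_set A -> exists n, has_card A n.
Proof.
  intros [l Hl]; destruct (has_card_list l) as [n Hn].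
  exists n; apply (has_card_ext _ _ _ (fun y => iff_sym (Hl y)) Hn).
Qed.

Lemma has_card_finite (A : E -> Prop) n : has_card A n -> finite_set A.
Proof. intros [l [_ [_ Hl]]]; exists l; exact Hl. Qed.

End FiniteCardinality.

Section Maximal.
Context {E : Type} (P : (E -> Prop) -> Prop).

Lemma maximal_in_subset_eq S T :
  maximal_in P S -> P T -> subset S T -> forall y, S y <-> T y.
Proof. intros [_ HS] HT HST y; split; [apply HST|apply (HS T HT HST)]. Qed.

Lemma maximal_in_setD1 S x : maximal_in P S -> S x -> ~ maximal_in P (setD1 S x).
Proof.
  intros [HS _] Hx [_ Hmax].
  exact (proj2 (Hmax S HS (fun y Hy => proj1 Hy) x Hx) eq_refl).
Qed.

Lemma maximal_in_setU1 S b : maximal_in P S -> ~ S b -> ~ P (setU1 S b).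
Proof.
  intros [_ Hmax] Hb HSb.
  exact (Hb (Hmax _ HSb (fun y Hy => or_introl Hy) b (or_intror eq_refl))).
Qed.

End Maximal.

Section BaseExchange.
Context {E : Type} (L : (E -> Prop) -> Prop) (HM : is_matroid L).

Lemma base_exchange B1 B2 x :
  is_base L B1 -> is_base L B2 -> B1 x -> ~ B2 x ->
  exists b, B2 b /\ ~ B1 b /\ is_base L (setU1 (setD1 B1 x) b).
Proof.
  intros HB1 HB2 Hx Hnx.
  assert (HLA : L (setD1 B1 x)) by (apply (I2 _ HM _ B1); [apply HB1|intros y []; auto]).
  destruct (I3 _ HM _ B2 HB2 HLA (maximal_in_setD1 _ _ _ HB1 Hx))
    as [b [Hb2 [Hb HLAb]]].
  assert (Hb1 : ~ B1 b) by (intros Hb1; apply Hb; split; congruence).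
  exists b; split; [|split]; auto.
  destruct (classic (is_base L (setU1 (setD1 B1 x) b))) as [|Hnmax]; auto.
  (* Otherwise [B1 - x + b] extends within [B1], necessarily by [x], and so
     [B1 + b] would be independent. *)
  destruct (I3 _ HM _ B1 HB1 HLAb Hnmax) as [c [Hc1 [Hc HLAbc]]].
  assert (Hcx : c = x) by (apply NNPP; intros Hcx; apply Hc; left; split; auto).
  subst c.
  exfalso; apply (maximal_in_setU1 _ _ _ HB1 Hb1), (I2 _ HM _ _ HLAbc).
  intros y [Hy| ->]; [|left; right; reflexivity].
  destruct (classic (y = x)) as [->|]; [right|left; left; split]; auto.
Qed.

Lemma base_eq_or_exchange B1 B2 :
  is_base L B1 -> is_base L B2 ->
  (forall y, B1 y <-> B2 y) \/
  exists x b, B1 x /\ ~ B2 x /\ B2 b /\ ~ B1 b /\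
    is_base L (setU1 (setD1 B1 x) b).
Proof.
  intros HB1 HB2.
  destruct (classic (subset B1 B2)) as [HB12|HB12].
  - left; exact (maximal_in_subset_eq _ _ _ HB1 (proj1 HB2) HB12).
  - right; destruct (not_all_ex_not _ _ HB12) as [x Hx].
    apply imply_to_and in Hx; destruct Hx as [Hx1 Hx2].
    destruct (base_exchange B1 B2 x HB1 HB2 Hx1 Hx2) as [b Hb].
    exists x, b; auto.
Qed.

Lemma has_card_setD_base n : forall F B1 B2,
  is_base L B1 -> is_base L B2 -> subset B1 F -> subset B2 F ->
  has_card (setD F B1) n -> has_card (setD F B2) n.
Proof.
  induction n as [|n IHn]; intros F B1 B2 HB1 HB2 HB1F HB2F Hn;
    destruct (base_eq_or_exchange B1 B2 HB1 HB2)
      as [HB12|(x & b & Hx1 & Hx2 & Hb2 & Hb1 & HB1')];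
    try (revert Hn; apply has_card_ext; intros y; unfold setD; rewrite HB12;
         reflexivity).
  - exfalso; exact (has_card0 _ b Hn (conj (HB2F b Hb2) Hb1)).
  - assert (HFx2 : has_card (setD (setD1 F x) B2) n).
    { apply (IHn _ _ B2 HB1' HB2).
      - intros y [[Hy Hyx]| ->]; split; auto; congruence.
      - intros y Hy; split; auto; congruence.
      - apply (has_card_ext (setD1 (setD F B1) b)).
        + intros y; rewrite setD_setD1_setU1; [reflexivity|exact Hx1].
        + apply has_card_setD1; [exact Hn|split; auto]. }
    apply (has_card_ext (setU1 (setD1 (setD F B2) x) x)).
    + intros y; apply setU1_setD1; split; auto.
    + apply has_card_setU1; [|intros [_ []]; reflexivity].
      revert HFx2; apply has_card_ext; intros y; unfold setD, setD1; tauto.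
Qed.

End BaseExchange.

Theorem theorem3p1p2 (E : Type) (L : (E -> Prop) -> Prop) (HM : is_matroid L)
  (F B1 B2 : E -> Prop) :
  is_base (fin_indep L) F ->
  is_base L B1 -> is_base L B2 ->
  subset B1 F -> subset B2 F ->
  card_eq_oo (setD F B1) (setD F B2).
Proof.
  intros _ HB1 HB2 HB1F HB2F.
  destruct (classic (finite_set (setD F B1))) as [Hfin|Hinf].
  - destruct (finite_set_has_card _ Hfin) as [n Hn].
    left; exists n; split; [exact Hn|].
    exact (has_card_setD_base L HM n F B1 B2 HB1 HB2 HB1F HB2F Hn).
  - right; split; [exact Hinf|intros Hfin].
    destruct (finite_set_has_card _ Hfin) as [n Hn].
    exact (Hinf (has_card_finite _ n
      (has_card_setD_base L HM n F B2 B1 HB2 HB1 HB2F HB1F Hn))).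
Qed.
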